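(* Let $n \geq 3$ be an integer and let $\ell$ be an odd positive integer. Then $B_n[\ell]/B_n[4\ell] \cong B_n/B_n[4]$.
   Context: $B_n$ denotes the braid group on $n$ strands with standard Artin generators $\sigma_1,\dots,\sigma_{n-1}$. The reduced integral Burau representation $\rho_{-1}: B_n \to GL(n-1,\mathbb{Z})$ is defined on generators by $\rho_{-1}(\sigma_1)=\begin{pmatrix}1&0\\1&1\end{pmatrix}\oplus \mathrm{Id}_{n-3}$, $\rho_{-1}(\sigma_{n-1})=\mathrm{Id}_{n-3}\oplus\begin{pmatrix}1&-1\\0&1\end{pmatrix}$, and for $1<i<n-1$, $\rho_{-1}(\sigma_i)=\mathrm{Id}_{i-2}\oplus\begin{pmatrix}1&-1&0\\0&1&0\\0&1&1\end{pmatrix}\oplus \mathrm{Id}_{n-i-2}$, where $\oplus$ denotes block-diagonal sum. For a positive integer $\ell$, let $r_\ell: GL(n-1,\mathbb{Z})\to GL(n-1,\mathbb{Z}/\ell\mathbb{Z})$ be entrywise reduction mod $\ell$. The level $\ell$ congruence subgroup of the braid group is $B_n[\ell] := \ker(r_\ell\circ\rho_{-1})$. *)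

From HB Require Import structures.
From mathcomp Require Import all_boot all_order all_algebra.
Set Implicit Arguments. Unset Strict Implicit. Unset Printing Implicit Defensive.
Import Order.TTheory GRing.Theory Num.Theory.
Local Open Scope ring_scope.

(* A word in the Artin generators of B_n: a letter (i, false) is sigma_(i+1),
   a letter (i, true) is sigma_(i+1)^-1, for i : 'I_(n-1) (0-indexed). *)
Definition bword (n : nat) := seq ('I_(n.-1) * bool).

Definition winv (n : nat) (w : bword n) : bword n :=
  rev (map (fun p => (p.1, ~~ p.2)) w).

(* This is exactly the paper's block description (the 2x2 blocks for
   sigma_1 and sigma_(n-1) are the truncations of the 3x3 block). *)
Definition rho_sigma (n : nat) (j : 'I_(n.-1)) : 'M[int]_(n.-1) :=
  \matrix_(a < n.-1, b < n.-1)
    ((a == b)%:R - ((a.+1 == j :> nat) && (b == j))%:R + ((a == j.+1 :> nat) && (b == j))%:R).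

(* rho_{-1}(sigma_(j+1)^-1) : since N = rho(sigma) - 1 satisfies N^2 = 0,
   the inverse is 1 - N. *)
Definition rho_sigma_inv (n : nat) (j : 'I_(n.-1)) : 'M[int]_(n.-1) :=
  \matrix_(a < n.-1, b < n.-1)
    ((a == b)%:R + ((a.+1 == j :> nat) && (b == j))%:R - ((a == j.+1 :> nat) && (b == j))%:R).

Definition rho_letter (n : nat) (p : 'I_(n.-1) * bool) : 'M[int]_(n.-1) :=
  if p.2 then rho_sigma_inv p.1 else rho_sigma p.1.

Definition rho (n : nat) (w : bword n) : 'M[int]_(n.-1) :=
  \prod_(p <- w) rho_letter p.

Definition mx_congr (n : nat) (m : nat) (A B : 'M[int]_n) : Prop :=
  forall i j, (A i j == B i j %[mod m%:Z])%Z.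

(* The braid represented by w lies in B_n[m] = ker (r_m o rho_{-1}). *)
Definition in_Bcong (n m : nat) (w : bword n) : Prop :=
  mx_congr m (rho w) 1%:M.

From mathcomp Require Import all_boot all_order all_algebra.
From mathcomp Require Import ring zify.
Set Implicit Arguments. Unset Strict Implicit. Unset Printing Implicit Defensive.
Import Order.TTheory GRing.Theory Num.Theory.

(* Every letter sigma^{+-1} acts by 1 + N with N^2 = 0, so sigma^k acts by
   1 + k N.  Hence the braid obtained from a word v by replacing each letter
   sigma by sigma^(l^2) lies in B_n[l] (as l | l^2) and is congruent to v
   modulo 4 (as l^2 = 1 mod 4 for odd l): the inclusion B_n[l] -> B_n is onto
   modulo B_n[4].  Its kernel B_n[l] /\ B_n[4] is B_n[4l] by the Chinese
   remainder theorem, since 4 and l are coprime. *)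

Local Open Scope ring_scope.

Section IntMatrixCongruence.

Context {k : nat} {m : int}.
Implicit Types A B C D : 'M[int]_k.

Lemma mxOver_dvdzMl A B : B \is a mxOver (dvdz m) -> A * B \is a mxOver (dvdz m).
Proof.
move=> /mxOverP hB; apply/mxOverP=> i j; rewrite -mulmxE mxE rpred_sum // => x _.
exact: dvdz_mull.
Qed.

Lemma mxOver_dvdzMr A B : A \is a mxOver (dvdz m) -> A * B \is a mxOver (dvdz m).
Proof.
move=> /mxOverP hA; apply/mxOverP=> i j; rewrite -mulmxE mxE rpred_sum // => x _.
exact: dvdz_mulr.
Qed.

Lemma mxOver_dvdz_mulrz A c : (m %| c)%Z -> A *~ c \is a mxOver (dvdz m).
Proof. by move=> hc; apply/mxOverP=> i j; rewrite -scaler_int mxE intz dvdz_mulr. Qed.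

Lemma mxOver_dvdz_congrM A B C D :
  A - B \is a mxOver (dvdz m) -> C - D \is a mxOver (dvdz m) ->
  A * C - B * D \is a mxOver (dvdz m).
Proof.
move=> hAB hCD.
have -> : A * C - B * D = A * (C - D) + (A - B) * D.
  by rewrite mulrBr mulrBl addrA subrK.
by apply: rpredD; [apply: mxOver_dvdzMl | apply: mxOver_dvdzMr].
Qed.

End IntMatrixCongruence.

Lemma mxOver_dvdz_coprimeM k (a b : int) (A : 'M[int]_k) : coprimez a b ->
  (A \is a mxOver (dvdz (a * b))) =
  (A \is a mxOver (dvdz a)) && (A \is a mxOver (dvdz b)).
Proof.
move=> co; apply/mxOverP/andP=> [h|[/mxOverP ha /mxOverP hb] i j].
  by split; apply/mxOverP=> i j; have := h i j; rewrite Gauss_dvdz // => /andP[].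
by rewrite Gauss_dvdz // ha hb.
Qed.

Lemma mx_congr1E k (m : nat) (A : 'M[int]_k) :
  mx_congr m A 1%:M <-> A - 1 \is a mxOver (dvdz m).
Proof.
by split=> [h|/mxOverP h]; [apply/mxOverP|]=> i j; move: (h i j); rewrite !mxE eqz_mod_dvd.
Qed.

Lemma unipotent_expr (R : pzRingType) (N : R) k :
  N * N = 0 -> (1 + N) ^+ k = 1 + N *+ k.
Proof.
move=> N2; elim: k => [|k IH]; first by rewrite expr0 mulr0n addr0.
by rewrite exprSr IH mulrDr mulr1 mulrDl mul1r mulrnAl N2 mul0rn addr0 -addrA -mulrSr.
Qed.

Section BurauLetters.

Variable n : nat.
Implicit Types (p : 'I_(n.-1) * bool) (w v : bword n).

Definition sigma_nilpart (j : 'I_(n.-1)) : 'M[int]_(n.-1) :=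
  \matrix_(a, b) (((a == j.+1 :> nat) && (b == j))%:R - ((a.+1 == j :> nat) && (b == j))%:R).

Lemma rho_sigmaE j : rho_sigma j = 1 + sigma_nilpart j.
Proof. by apply/matrixP=> a b; rewrite !mxE; ring. Qed.

Lemma rho_sigma_invE j : rho_sigma_inv j = 1 - sigma_nilpart j.
Proof. by apply/matrixP=> a b; rewrite !mxE; ring. Qed.

Lemma sigma_nilpart_sqr j : sigma_nilpart j * sigma_nilpart j = 0.
Proof.
apply/matrixP=> a b; rewrite -mulmxE !mxE big1 // => c _; rewrite !mxE.
have [->|/negPf ncj] := eqVneq c j; last by rewrite !andbF subrr mul0r.
by rewrite (gtn_eqF (ltnSn j)) (ltn_eqF (ltnSn j)) !andFb subrr mulr0.
Qed.

Definition letter_nilpart p : 'M[int]_(n.-1) :=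
  if p.2 then - sigma_nilpart p.1 else sigma_nilpart p.1.

Lemma rho_letterE p : rho_letter p = 1 + letter_nilpart p.
Proof. by rewrite /rho_letter /letter_nilpart; case: p.2; rewrite ?rho_sigma_invE ?rho_sigmaE. Qed.

Lemma letter_nilpart_sqr p : letter_nilpart p * letter_nilpart p = 0.
Proof. by rewrite /letter_nilpart; case: p.2; rewrite ?mulrNN sigma_nilpart_sqr. Qed.

Lemma letter_nilpart_inv p : letter_nilpart (p.1, ~~ p.2) = - letter_nilpart p.
Proof. by rewrite /letter_nilpart /=; case: p.2; rewrite ?opprK. Qed.

Lemma rho_letter_invl p : rho_letter (p.1, ~~ p.2) * rho_letter p = 1.
Proof.
rewrite !rho_letterE letter_nilpart_inv mulrDl mul1r mulNr mulrDr mulr1 letter_nilpart_sqr.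
by rewrite addr0 addrK.
Qed.

Lemma rho_nil : rho ([::] : bword n) = 1.
Proof. exact: big_nil. Qed.

Lemma rho_cons p w : rho (p :: w) = rho_letter p * rho w.
Proof. exact: big_cons. Qed.

Lemma rho_cat w v : rho (w ++ v) = rho w * rho v.
Proof. exact: big_cat. Qed.

Lemma rho_nseq k p : rho (nseq k p) = 1 + letter_nilpart p *+ k.
Proof.
rewrite -unipotent_expr ?letter_nilpart_sqr // -rho_letterE.
elim: k => [|k IH]; first by rewrite rho_nil expr0.
by rewrite [nseq _ _]/= rho_cons exprS IH.
Qed.

Lemma rho_winv_mull w : rho (winv w) * rho w = 1.
Proof.
elim: w => [|p w IH]; first by rewrite rho_nil mulr1.
rewrite /winv /= rev_cons -cats1 -/(winv w) rho_cat !rho_cons rho_nil mulr1.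
by rewrite -mulrA (mulrA (rho_letter _)) rho_letter_invl mul1r IH.
Qed.

Lemma rho_winv_mulr w : rho w * rho (winv w) = 1.
Proof. by rewrite -mulmxE; apply: mulmx1C; rewrite mulmxE rho_winv_mull. Qed.

Lemma in_Bcong_winv_catE (m : nat) w v :
  in_Bcong m (winv w ++ v) <-> rho v - rho w \is a mxOver (dvdz m).
Proof.
have eq_winv : rho (winv w ++ v) - 1 = rho (winv w) * (rho v - rho w).
  by rewrite rho_cat mulrBr rho_winv_mull.
rewrite /in_Bcong mx_congr1E eq_winv; split; last exact: mxOver_dvdzMl.
by move/(mxOver_dvdzMl (rho w)); rewrite mulrA rho_winv_mulr mul1r.
Qed.

Lemma in_Bcong_rho_sub (m : nat) w v :
  in_Bcong m w -> in_Bcong m v -> rho v - rho w \is a mxOver (dvdz m).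
Proof.
rewrite /in_Bcong !mx_congr1E => hw hv.
have -> : rho v - rho w = (rho v - 1) - (rho w - 1) by rewrite opprB addrA subrK.
exact: rpredB.
Qed.

Definition bword_pow k v : bword n := flatten [seq nseq k p | p <- v].

Lemma bword_pow_cons k p v : bword_pow k (p :: v) = nseq k p ++ bword_pow k v.
Proof. by []. Qed.

Lemma bword_pow1 v : bword_pow 1 v = v.
Proof. by rewrite /bword_pow flatten_map1 map_id. Qed.

Lemma rho_bword_pow0 v : rho (bword_pow 0 v) = 1.
Proof. by rewrite /bword_pow; elim: v => [|p v IH]; rewrite /= ?rho_nil. Qed.

Lemma rho_bword_pow_congr (m : int) k k' v : (m %| k%:Z - k'%:Z)%Z ->
  rho (bword_pow k v) - rho (bword_pow k' v) \is a mxOver (dvdz m).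
Proof.
move=> dvd_m; elim: v => [|p v IH]; first by rewrite subrr rpred0.
rewrite !bword_pow_cons !rho_cat; apply: mxOver_dvdz_congrM IH.
rewrite !rho_nseq opprD addrACA subrr add0r.
have -> : letter_nilpart p *+ k - letter_nilpart p *+ k' = letter_nilpart p *~ (k%:Z - k'%:Z).
  by rewrite mulrzBr.
exact: mxOver_dvdz_mulrz.
Qed.

Lemma in_Bcong_bword_pow (m k : nat) v : (m %| k)%N -> in_Bcong m (bword_pow k v).
Proof.
move=> dvd_mk; rewrite /in_Bcong mx_congr1E -(rho_bword_pow0 v).
by apply: rho_bword_pow_congr; rewrite subr0.
Qed.

Lemma in_Bcong_winv_bword_pow (m k : nat) v : (m %| k%:Z - 1)%Z ->
  in_Bcong m (winv (bword_pow k v) ++ v).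
Proof.
move=> dvd_m; rewrite in_Bcong_winv_catE -{1}(bword_pow1 v).
by apply: rho_bword_pow_congr; rewrite -opprB rpredN.
Qed.

End BurauLetters.

Lemma coprimez4_odd l : odd l -> coprimez 4 l%:Z.
Proof.
by move=> hl; rewrite coprimezE; change (coprime (2 ^ 2) l); rewrite coprime_pexpl // coprime2n hl.
Qed.

Lemma dvdz4_sqr_odd l : odd l -> (4 %| (l * l)%:Z - 1)%Z.
Proof.
move=> hl; rewrite -(odd_double_half l) hl; apply/dvdzP.
exists (l./2 * l./2 + l./2)%:Z; lia.
Qed.

Local Close Scope ring_scope.

Theorem theorem3p3 (n l : nat) (hn : 3 <= n) (hl0 : 0 < l) (hlodd : odd l) :
  exists f : bword n -> bword n,
    [/\ (forall w w' : bword n, in_Bcong l w -> in_Bcong l w' ->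
           (in_Bcong (4 * l) (winv w ++ w') <-> in_Bcong 4 (winv (f w) ++ f w'))),
        (forall w w' : bword n, in_Bcong l w -> in_Bcong l w' ->
           in_Bcong 4 (winv (f (w ++ w')) ++ (f w ++ f w')))
      & (forall v : bword n, exists2 w : bword n, in_Bcong l w &
           in_Bcong 4 (winv (f w) ++ v))].
Proof.
(* f is the inclusion B_n[l] -> B_n. *)
exists id; split=> [w w' hw hw' | w w' _ _ | v].
- rewrite !in_Bcong_winv_catE PoszM mxOver_dvdz_coprimeM ?coprimez4_odd //.
  by rewrite (in_Bcong_rho_sub hw hw') andbT.
- by rewrite in_Bcong_winv_catE rho_cat subrr rpred0.
- exists (bword_pow (l * l) v); first exact/in_Bcong_bword_pow/dvdn_mulr.
  exact/in_Bcong_winv_bword_pow/dvdz4_sqr_odd.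
Qed.
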